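(* Let $(S,\mathscr{S})$ be a measurable space, $n\le N$, and $X=(X_1,\ldots,X_n)$ an exchangeable random element of $S^n$. If $\mathcal L$ is an extending functional with $\|\mathcal L\|=1$ such that the set function $F_{\mathcal L}(A):=\mathcal L(\mathbf 1_A)$, $A\in\mathscr{S}^N$, is countably additive on the algebra generated by the measurable rectangles of $S^N$, then there is a unique exchangeable probability measure $Q$ on $S^N$ such that $Q(A)=F_{\mathcal L}(A)$ for all measurable rectangles $A\subset S^N$, and $Q$ is an $N$-extension of the law of $X$, i.e. $Q(A\times S^{N-n})=\mathbb{P}(X\in A)$ for all $A\in\mathscr{S}^n$.
   Context: A measurable rectangle of $S^N$ is a set $B_1\times\cdots\times B_N$ with $B_i\in\mathscr{S}$. $b(S^k)$ is the space of bounded measurable real functions on $S^k$ with the sup norm. With $\mathfrak S[n,N]$ the set of injections $\{1,\ldots,n\}\to\{1,\ldots,N\}$ and $(N)_n=N(N-1)\cdots(N-n+1)$, $U^N_ng(x_1,\ldots,x_N)=\frac1{(N)_n}\sum_{\sigma\in\mathfrak S[n,N]}g(x_{\sigma(1)},\ldots,x_{\sigma(n)})$. The primitive extending functional $\mathcal E$ on $U^N_n(b(S^n))$ is $\mathcal E(U^N_ng)=\mathbb{E}\,g(X)$ (well defined). An extending functional is a linear functional $\mathcal L:b(S^N)\to\mathbb{R}$ which is invariant under permutations of the arguments of its input, agrees with $\mathcal E$ on $U^N_n(b(S^n))$, and has $\|\mathcal L\|=\|\mathcal E\|$. A probability measure on $S^N$ is exchangeable if invariant under coordinate permutations. *)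

From HB Require Import structures.
From mathcomp Require Import all_boot all_order all_algebra all_fingroup.
From mathcomp Require Import all_classical all_reals all_analysis.
Set Implicit Arguments. Unset Strict Implicit. Unset Printing Implicit Defensive.
Import Order.TTheory GRing.Theory Num.Theory numFieldNormedType.Exports.
Local Open Scope classical_set_scope.
Local Open Scope ring_scope.

(* S^k is modelled by k.-tuple S, with the library's product sigma-algebra
   (generated by the coordinate projections = generated by measurable rectangles). *)

Section Defs.
Context {R : realType} {d : measure_display} {S : measurableType d}.

Definition bmeas (k : nat) (f : k.-tuple S -> R) : Prop :=
  measurable_fun setT f /\ exists M : R, forall x, `|f x| <= M.

Definition perm_tuple (N : nat) (s : 'S_N) (x : N.-tuple S) : N.-tuple S :=
  [tuple tnth x (s i) | i < N].

Definition UN (N n : nat) (g : n.-tuple S -> R) (x : N.-tuple S) : R :=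
  (N ^_ n)%:R^-1 *
  \sum_(s : {ffun 'I_n -> 'I_N} | injectiveb s) g [tuple tnth x (s i) | i < n].

Definition rectangles (N : nat) : set (set (N.-tuple S)) :=
  [set A | exists B : 'I_N -> set S,
     (forall i, measurable (B i)) /\ A = [set x | forall i, B i (tnth x i)]].

Definition exchangeable_measure (N : nat) (Q : set (N.-tuple S) -> \bar R) : Prop :=
  forall (s : 'S_N) (A : set (N.-tuple S)), measurable A ->
    Q (perm_tuple s @^-1` A) = Q A.

Definition norm_functional (N : nat) (L : (N.-tuple S -> R) -> R) : \bar R :=
  ereal_sup [set (`|L f|)%:E | f in [set f | bmeas f /\ forall x, `|f x| <= 1]].

Section Ext.
Context {dO : measure_display} {Omega : measurableType dO}.

Definition expect (P : probability Omega R) (n : nat) (X : Omega -> n.-tuple S)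
  (g : n.-tuple S -> R) : R := fine (\int[P]_w (g (X w))%:E).

Definition norm_primitive (P : probability Omega R) (N n : nat)
  (X : Omega -> n.-tuple S) : \bar R :=
  ereal_sup [set (`|expect P X g|)%:E |
               g in [set g | bmeas g /\ forall x, `|@UN N n g x| <= 1]].

Definition extending_functional (P : probability Omega R) (N n : nat)
  (X : Omega -> n.-tuple S) (L : (N.-tuple S -> R) -> R) : Prop :=
  [/\
      (forall (a b : R) f g, bmeas f -> bmeas g ->
          L (fun x => a * f x + b * g x) = a * L f + b * L g),
      (forall (s : 'S_N) f, bmeas f -> L (f \o perm_tuple s) = L f),
      (forall g, bmeas g -> L (@UN N n g) = expect P X g) &
      norm_functional L = norm_primitive P N X].
End Ext.

Definition setalgebra (T : Type) (G : set (set T)) : Prop :=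
  [/\ G setT, (forall A, G A -> G (~` A)) & (forall A B, G A -> G B -> G (A `|` B))].

Definition countably_additive_on (T : Type) (Alg : set (set T)) (F : set T -> R) : Prop :=
  forall A : nat -> set T, (forall k, Alg (A k)) -> trivIset setT A ->
    Alg (\bigcup_k A k) ->
    (fun m => \sum_(0 <= k < m) F (A k)) @ \oo --> F (\bigcup_k A k).

End Defs.

(* The set function A |-> L(1_A) is nonnegative (the norm condition forces
   |1 - 2 L(1_A)| <= 1) and countably additive on the algebra generated by the
   measurable rectangles, so Carathéodory's theorem extends it to a probability
   Q on S^N.  The rectangles form a pi-system generating the product
   sigma-algebra, so measures agreeing on rectangles agree everywhere; this
   gives uniqueness, and exchangeability since permuting coordinates maps
   rectangles to rectangles and L is permutation invariant.  Finally, for every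
   injection s, the indicator of {x | (x_s(1),...,x_s(n)) in A} is the indicator
   of the cylinder {x | (x_1,...,x_n) in A} composed with a permutation, so
   L(U^N_n 1_A) = L(1_cylinder) and Q(A x S^(N-n)) = E 1_A(X) = P(X in A). *)
From HB Require Import structures.
From mathcomp Require Import all_boot all_order all_algebra all_fingroup all_solvable.
From mathcomp Require Import all_classical all_reals all_analysis.
From mathcomp Require Import lra measurable_realfun.
Import Order.TTheory GRing.Theory Num.Theory numFieldNormedType.Exports.
Local Open Scope classical_set_scope.
Local Open Scope ring_scope.
Set Implicit Arguments. Unset Strict Implicit. Unset Printing Implicit Defensive.

Section rectangles.
Context {d : measure_display} {S : measurableType d} (N : nat).
Implicit Types A : set (N.-tuple S).

Lemma measurable_rectangle A : rectangles A -> measurable A.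
Proof.
move=> [B [mB ->]].
have -> : [set x : N.-tuple S | forall i, B i (tnth x i)] =
    \bigcap_(i in [set: 'I_N]) (setT `&` (fun x : N.-tuple S => tnth x i) @^-1` B i).
  by apply/seteqP; split => x /= H i; [move=> _; split | have [] := H i I].
apply: fin_bigcap_measurable; first exact: finite_finset.
by move=> i _; exact: (measurable_tnth i measurableT (mB i)).
Qed.

Lemma rectangles_setT : rectangles [set: N.-tuple S].
Proof. by exists (fun=> setT); split => //; apply/seteqP; split. Qed.

Lemma setI_closed_rectangles : setI_closed (@rectangles d S N).
Proof.
move=> _ _ [B1 [mB1 ->]] [B2 [mB2 ->]].
exists (fun i => B1 i `&` B2 i); split => [i|]; first exact: measurableI.
apply/seteqP; split => x /=; first by move=> [H1 H2] i; split.
by move=> H; split => i; have [] := H i.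
Qed.

Lemma rectangle_preimage_tnth (i : 'I_N) (B : set S) : measurable B ->
  rectangles (setT `&` (fun x : N.-tuple S => tnth x i) @^-1` B).
Proof.
move=> mB; exists (fun j => if j == i then B else setT); split.
  by move=> j; case: ifP.
apply/seteqP; split => x /=; first by move=> [_ Bx] j; case: eqP => [->|].
by move=> H; split => //; have := H i; rewrite eqxx.
Qed.

Lemma sub_sigma_rectangles (G : set (set (N.-tuple S))) :
  @rectangles d S N `<=` G -> measurable `<=` <<s G >>.
Proof.
move=> rG; apply: smallest_sub; first exact: smallest_sigma_algebra.
elim/big_ind: _ => //; first by move=> X Y HX HY Z [/HX|/HY].
move=> i _ Z /= [B mB <-]; apply: sub_sigma_algebra; apply: rG.
exact: rectangle_preimage_tnth.
Qed.

Lemma measure_eq_on_rectangles {R : realType}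
    (m1 m2 : {measure set (N.-tuple S) -> \bar R}) :
  (m1 setT < +oo)%E -> (forall A, rectangles A -> m1 A = m2 A) ->
  forall A, measurable A -> m1 A = m2 A.
Proof.
move=> m1T m12 A mA.
apply: (g_sigma_algebra_measure_unique (@rectangles d S N) _ (fun=> setT)) => //.
- by move=> B /measurable_rectangle.
- by move=> _; exact: rectangles_setT.
- by rewrite bigcup_const.
- exact: setI_closed_rectangles.
- exact: sub_sigma_rectangles.
Qed.

Lemma rectangle_preimage_perm (s : 'S_N) A :
  rectangles A -> rectangles (perm_tuple s @^-1` A).
Proof.
move=> [B [mB ->]]; exists (fun j => B (s^-1 j)%g); split => //.
apply/seteqP; split => x /= H j; rewrite /perm_tuple ?tnth_mktuple.
  by have := H (s^-1 j)%g; rewrite tnth_mktuple permKV.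
by have := H (s j); rewrite permK.
Qed.

Lemma measurable_perm_tuple (s : 'S_N) : measurable_fun setT (@perm_tuple d S N s).
Proof.
apply/measurable_fun_tnthP => i.
rewrite (_ : _ \o _ = fun x => tnth x (s i)); first exact: measurable_tnth.
by apply/funext => x; rewrite /= tnth_mktuple.
Qed.

End rectangles.

Section cylinder.
Context {d : measure_display} {S : measurableType d} (n N : nat) (hnN : (n <= N)%N).

Definition head_tuple (x : N.-tuple S) : n.-tuple S :=
  [tuple tnth x (widen_ord hnN i) | i < n].

Lemma measurable_head_tuple : measurable_fun setT head_tuple.
Proof.
apply/measurable_fun_tnthP => i.
rewrite (_ : _ \o _ = fun x => tnth x (widen_ord hnN i)); first exact: measurable_tnth.
by apply/funext => x; rewrite /= tnth_mktuple.
Qed.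

Lemma rectangle_preimage_head (A : set (n.-tuple S)) :
  rectangles A -> rectangles (head_tuple @^-1` A).
Proof.
move=> [B [mB ->]].
exists (fun j : 'I_N => if insub (val j) is Some i then B i else setT).
split => [j|]; first by case: insubP.
apply/seteqP; split => x /= H j; rewrite /head_tuple ?tnth_mktuple.
  case: insubP => [i _ vi|//]; have := H i; rewrite tnth_mktuple.
  by rewrite (_ : widen_ord hnN i = j) //; exact: val_inj.
have := H (widen_ord hnN j); case: insubP => [i _ vi|] /=; last by rewrite ltn_ord.
by rewrite (_ : i = j) //; exact: val_inj.
Qed.

Lemma injective_extends_to_perm (s : 'I_n -> 'I_N) : injective s ->
  exists p : 'S_N, forall i, p (widen_ord hnN i) = s i.
Proof.
move=> s_inj.
have nN : (n <= #|'I_N|)%N by rewrite card_ord.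
have Sym_ntrans := ntransitive_weak nN (Sym_trans 'I_N).
have dtuple_inj (f : 'I_n -> 'I_N) : injective f ->
    [tuple f i | i < n] \in n.-dtuple([set: 'I_N]%SET).
  move=> f_inj; apply/dtuple_onP; split=> [i j|i]; last by rewrite inE.
  by rewrite !tnth_mktuple => /f_inj.
have widen_inj : injective (widen_ord hnN) by move=> i j [] /val_inj.
have [p _ ep] := atransP2 Sym_ntrans (dtuple_inj _ widen_inj) (dtuple_inj _ s_inj).
exists p => i; have := congr1 (fun t => tnth t i) ep.
by rewrite /= tnth_mktuple tnth_map tnth_mktuple /= apermE => ->.
Qed.

End cylinder.

Section rect_algebra.
Context {d : measure_display} {S : measurableType d} (N : nat).

Definition rect_algebra : set (set (N.-tuple S)) :=
  smallest (@setalgebra _) (@rectangles d S N).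

Lemma setalgebra_rect_algebra : setalgebra rect_algebra.
Proof.
split; first by move=> M [[]].
- by move=> A HA M MG; case: (MG) => [[_ MC _] _]; apply: MC; exact: HA.
- move=> A B HA HB M MG; case: (MG) => [[_ _ MU] _].
  by apply: MU; [exact: HA | exact: HB].
Qed.

Lemma rectangles_sub_rect_algebra : @rectangles d S N `<=` rect_algebra.
Proof. exact: sub_smallest. Qed.

Lemma rect_algebra_measurable : rect_algebra `<=` measurable.
Proof.
apply: smallest_sub; last by move=> A /measurable_rectangle.
by split; [exact: measurableT | exact: measurableC | exact: measurableU].
Qed.

Lemma rect_algebra0 : rect_algebra set0.
Proof. by have [RT RC _] := setalgebra_rect_algebra; rewrite -setCT; exact: RC RT. Qed.

Lemma rect_algebraC : setC_closed rect_algebra.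
Proof. by have [] := setalgebra_rect_algebra. Qed.

Lemma rect_algebraU : setU_closed rect_algebra.
Proof. by have [] := setalgebra_rect_algebra. Qed.

(* A copy of S^N whose measurable sets are those of [rect_algebra], so that
   the library's Carathéodory extension applies to it. *)
Definition rect_algebra_type : Type := N.-tuple S.
HB.instance Definition _ := Pointed.on rect_algebra_type.
HB.instance Definition _ := @isAlgebraOfSets.Build default_measure_display
  rect_algebra_type rect_algebra rect_algebra0 rect_algebraU rect_algebraC.

End rect_algebra.

Section probability_extension.
Context {R : realType} {d : measure_display} {S : measurableType d} (N : nat)
  (F : set (N.-tuple S) -> R).
Hypothesis F_ge0 : forall A, rect_algebra A -> 0 <= F A.
Hypothesis F0 : F set0 = 0.
Hypothesis FT : F setT = 1.
Hypothesis F_sigma_additive : countably_additive_on (@rect_algebra d S N) F.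

(* The truncation at 0 only matters outside [rect_algebra], where the library
   still requires nonnegativity. *)
Let premeasure (A : set (rect_algebra_type N)) : \bar R := (Num.max (F A) 0)%:E.

Let premeasureE A : rect_algebra A -> premeasure A = (F A)%:E.
Proof. by move=> RA; rewrite /premeasure max_l // F_ge0. Qed.

Let premeasure0 : premeasure set0 = 0%E.
Proof. by rewrite /premeasure F0 maxxx. Qed.

Let premeasure_ge0 A : (0 <= premeasure A)%E.
Proof. by rewrite /premeasure lee_fin le_max lexx orbT. Qed.

Let premeasure_sigma_additive : semi_sigma_additive premeasure.
Proof.
move=> A RA tA RUA; rewrite premeasureE //.
rewrite (_ : (fun m => _) = (fun m => (\sum_(0 <= k < m) F (A k))%:E)).
  by apply: cvg_EFin; [exact: nearW | exact: F_sigma_additive].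
apply/funext => m; rewrite -sumEFin; apply: eq_bigr => k _.
by rewrite premeasureE //; exact: RA.
Qed.

HB.instance Definition _ := isMeasure.Build _ (rect_algebra_type N) R premeasure
  premeasure0 premeasure_ge0 premeasure_sigma_additive.

Let Q : set (N.-tuple S) -> \bar R := measure_extension premeasure.

Let QE A : rect_algebra A -> Q A = (F A)%:E.
Proof.
by move=> RA; rewrite /Q /measure_extension measurable_mu_extE //; exact: premeasureE.
Qed.

Let Q0 : Q set0 = 0%E.
Proof. exact: measure0. Qed.

Let Q_ge0 A : (0 <= Q A)%E.
Proof. exact: (measure_ge0 (measure_extension premeasure)). Qed.

Let Q_sigma_additive : semi_sigma_additive Q.
Proof.
have sub_sigma := sub_sigma_rectangles (@rectangles_sub_rect_algebra d S N).
move=> A mA tA mUA.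
exact: (measure_semi_sigma_additive (s := measure_extension premeasure) A
  (fun k => sub_sigma _ (mA k)) tA (sub_sigma _ mUA)).
Qed.

HB.instance Definition _ := isMeasure.Build _ (N.-tuple S) R Q Q0 Q_ge0 Q_sigma_additive.

Let QT : Q setT = 1%E.
Proof. by rewrite QE ?FT //; have [] := setalgebra_rect_algebra (S:=S) N. Qed.

HB.instance Definition _ := Measure_isProbability.Build _ (N.-tuple S) R Q QT.

Lemma probability_extension_rect_algebra :
  exists Q : probability (N.-tuple S) R, forall A, rect_algebra A -> Q A = (F A)%:E.
Proof. by exists Q. Qed.

End probability_extension.

Section bmeas.
Context {R : realType} {d : measure_display} {S : measurableType d} (k : nat).
Implicit Types f g : k.-tuple S -> R.

Lemma bmeas_indic (A : set (k.-tuple S)) : measurable A -> @bmeas R d S k (\1_A).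
Proof.
move=> mA; split; first exact: measurable_indic.
by exists 1 => x; rewrite indicE; case: (x \in A); rewrite ?normr1 ?normr0.
Qed.

Lemma bmeas_cst (c : R) : @bmeas R d S k (fun=> c).
Proof. by split; [exact: measurable_cst | exists `|c|]. Qed.

Lemma bmeas_lin (a b : R) f g : bmeas f -> bmeas g -> bmeas (fun x => a * f x + b * g x).
Proof.
move=> [mf [M1 hf]] [mg [M2 hg]]; split.
  by apply: measurable_funD; apply: measurable_funM => //; exact: measurable_cst.
exists (`|a| * M1 + `|b| * M2) => x.
apply: (le_trans (ler_normD _ _)); rewrite !normrM.
by apply: lerD; apply: ler_wpM2l.
Qed.

Lemma bmeas_sum (I : Type) (r : seq I) (Pr : pred I) (h : I -> k.-tuple S -> R) :
  (forall i, bmeas (h i)) -> bmeas (fun x => \sum_(i <- r | Pr i) h i x).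
Proof.
move=> bh; elim: r => [|i r IH].
  by rewrite (_ : (fun x => _) = fun=> 0); [exact: bmeas_cst | apply/funext => x;
    rewrite big_nil].
rewrite (_ : (fun x => _) = fun x =>
    1 * (if Pr i then h i x else 0) + 1 * \sum_(j <- r | Pr j) h j x).
  by apply: bmeas_lin => //; case: (Pr i); [exact: bh | exact: bmeas_cst].
by apply/funext => x; rewrite big_cons !mul1r; case: (Pr i); rewrite ?add0r.
Qed.

End bmeas.

Lemma card_injective_ffun (n N : nat) :
  #|[pred s : {ffun 'I_n -> 'I_N} | injectiveb s]| = (N ^_ n)%N.
Proof.
have := card_inj_ffuns 'I_n 'I_N; rewrite !card_ord => <-.
by apply: eq_card => s; rewrite !inE.
Qed.

Lemma probability_lty {R : realType} {d : measure_display} {T : measurableType d}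
  (Q : probability T R) (A : set T) : measurable A -> (Q A < +oo)%E.
Proof. by move=> mA; have /fin_numPlt/andP[_ ->] := fin_num_measure Q A mA. Qed.

Section extending_functional.
Context {R : realType} {d : measure_display} {S : measurableType d}
  {dO : measure_display} {Omega : measurableType dO} (P : probability Omega R)
  (n N : nat) (hnN : (n <= N)%N) (X : Omega -> n.-tuple S)
  (L : (N.-tuple S -> R) -> R).
Hypothesis L_ext : extending_functional P X L.

Let L_lin : forall (a b : R) f g, bmeas f -> bmeas g ->
  L (fun x => a * f x + b * g x) = a * L f + b * L g.
Proof. by case: L_ext. Qed.

Let L_perm : forall (s : 'S_N) f, bmeas f -> L (f \o perm_tuple s) = L f.
Proof. by case: L_ext. Qed.

Let L_UN : forall g, bmeas g -> L (@UN R d S N n g) = expect P X g.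
Proof. by case: L_ext. Qed.

Let ffact_neq0 : (N ^_ n)%:R != 0 :> R.
Proof. by rewrite pnatr_eq0 -lt0n ffact_gt0. Qed.

Lemma UN_cst (c : R) : @UN R d S N n (fun=> c) = fun=> c.
Proof.
apply/funext => x; rewrite /UN sumr_const card_injective_ffun.
by rewrite -(mulr_natr c) mulrCA mulVf ?mulr1.
Qed.

Lemma extending_functional_cst (c : R) : L (fun=> c) = c.
Proof.
rewrite -[in LHS]UN_cst L_UN; last exact: bmeas_cst.
by rewrite /expect integral_cst //= probability_setT mule1.
Qed.

Lemma extending_functional_scale (c : R) f : bmeas f -> L (fun x => c * f x) = c * L f.
Proof.
move=> bf; rewrite -[RHS]addr0 -(mul0r (L f)) -L_lin //.
by congr L; apply/funext => x; rewrite mul0r addr0.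
Qed.

Lemma extending_functional_add f g : bmeas f -> bmeas g ->
  L (fun x => f x + g x) = L f + L g.
Proof.
move=> bf bg; rewrite -[L f]mul1r -[L g]mul1r -L_lin //.
by congr L; apply/funext => x; rewrite !mul1r.
Qed.

Lemma extending_functional_sum (I : Type) (r : seq I) (Pr : pred I)
  (h : I -> N.-tuple S -> R) : (forall i, bmeas (h i)) ->
  L (fun x => \sum_(i <- r | Pr i) h i x) = \sum_(i <- r | Pr i) L (h i).
Proof.
move=> bh; elim: r => [|i r IH].
  by rewrite big_nil -[RHS](extending_functional_cst 0); congr L; apply/funext => x;
    rewrite big_nil.
rewrite big_cons; case: ifP => Pi; last first.
  by rewrite -IH; congr L; apply/funext => x; rewrite big_cons Pi.
rewrite -IH -extending_functional_add //; last exact: bmeas_sum.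
by congr L; apply/funext => x; rewrite big_cons Pi.
Qed.

Lemma extending_functional_indic_perm (s : 'S_N) (A : set (N.-tuple S)) :
  measurable A -> L (\1_(perm_tuple s @^-1` A)) = L (\1_A).
Proof. by move=> mA; rewrite -(L_perm s (bmeas_indic mA)). Qed.

Hypothesis L_norm1 : norm_functional L = 1%E.

Lemma extending_functional_indic_ge0 (A : set (N.-tuple S)) :
  measurable A -> 0 <= L (\1_A).
Proof.
move=> mA; pose f x := 1 * (fun=> 1 : R) x + (-2) * \1_A x.
have bf : bmeas f by apply: bmeas_lin; [exact: bmeas_cst | exact: bmeas_indic].
have f_le1 x : `|f x| <= 1.
  by rewrite /f indicE; case: (x \in A); rewrite /= ler_norml; apply/andP; split; lra.
have : ((`|L f|)%:E <= norm_functional L)%E by apply: ereal_sup_ubound; exists f.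
rewrite L_norm1 lee_fin /f L_lin ?extending_functional_cst;
  [|exact: bmeas_cst | exact: bmeas_indic].
by rewrite ler_norml => /andP[]; lra.
Qed.

Hypothesis measurable_X : measurable_fun setT X.

Lemma extending_functional_indic_head (A : set (n.-tuple S)) : measurable A ->
  L (\1_(head_tuple hnN @^-1` A)) = fine (P (X @^-1` A)).
Proof.
move=> mA; set C := head_tuple hnN @^-1` A.
have mC : measurable C.
  by rewrite -[C]setTI; exact: measurable_head_tuple.
have UN_indic : @UN R d S N n (\1_A) = fun x => (N ^_ n)%:R^-1 *
    \sum_(s : {ffun 'I_n -> 'I_N} | injectiveb s) \1_A [tuple tnth x (s i) | i < n].
  by [].
have L_term (s : {ffun 'I_n -> 'I_N}) : injectiveb s ->
    L (fun x => \1_A [tuple tnth x (s i) | i < n]) = L (\1_C).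
  move=> /injectiveP /(injective_extends_to_perm hnN) [p ps].
  rewrite -(extending_functional_indic_perm p mC); congr L; apply/funext => x.
  rewrite !indicE; congr (_%:R); congr (_ \in A).
  by apply: eq_from_tnth => i; rewrite /head_tuple /perm_tuple !tnth_mktuple ps.
have b_term (s : {ffun 'I_n -> 'I_N}) :
    bmeas (fun x : N.-tuple S => \1_A [tuple tnth x (s i) | i < n] : R).
  apply: (bmeas_indic (A := [set x | A [tuple tnth x (s i) | i < n]])).
  rewrite -[X in measurable X]setTI; apply: (measurable_fun_tnthP _).2 mA => //.
  move=> i; rewrite (_ : _ \o _ = fun x => tnth x (s i)); first exact: measurable_tnth.
  by apply/funext => x; rewrite /= tnth_mktuple.
have := L_UN (bmeas_indic mA); rewrite UN_indic extending_functional_scale;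
  last exact: bmeas_sum.
rewrite extending_functional_sum // (eq_bigr _ L_term) sumr_const card_injective_ffun.
rewrite -[L _ *+ _]mulr_natr mulrCA mulVf // mulr1 => ->.
rewrite /expect (_ : (fun w => _) = (fun w => (\1_(X @^-1` A) w)%:E)) //.
by rewrite integral_indic ?setIT // -[X in measurable X]setTI; exact: measurable_X.
Qed.

Section agreeing_on_rectangles.
Variable Q : probability (N.-tuple S) R.
Hypothesis QR : forall A, rectangles A -> Q A = (L (\1_A))%:E.

Lemma exchangeable_agreeing_on_rectangles : exchangeable_measure Q.
Proof.
move=> s A mA; apply: (measure_eq_on_rectangles (m1 := pushforward Q _)) => //.
- exact: measurable_perm_tuple.
- move=> ?; change (Q (perm_tuple s @^-1` setT) < +oo)%E; rewrite preimage_setT.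
  exact: probability_lty.
- move=> ? B RB; change (Q (perm_tuple s @^-1` B) = Q B).
  rewrite (QR (rectangle_preimage_perm s RB)) QR //.
  by rewrite extending_functional_indic_perm //; exact: measurable_rectangle.
Qed.

Lemma head_law_agreeing_on_rectangles (A : set (n.-tuple S)) : measurable A ->
  Q (head_tuple hnN @^-1` A) = P (X @^-1` A).
Proof.
move=> mA; apply: (measure_eq_on_rectangles (m1 := pushforward Q _)
  (m2 := pushforward P X)) => //.
- exact: measurable_head_tuple.
- move=> ?; change (Q (head_tuple hnN @^-1` setT) < +oo)%E; rewrite preimage_setT.
  exact: probability_lty.
- move=> ? B RB; change (Q (head_tuple hnN @^-1` B) = P (X @^-1` B)).
  have mB := measurable_rectangle RB.
  rewrite QR ?extending_functional_indic_head //; last exact: rectangle_preimage_head.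
  by rewrite fineK // fin_num_measure // -[X in measurable X]setTI; exact: measurable_X.
Qed.

End agreeing_on_rectangles.

End extending_functional.

Theorem lemma10 (R : realType) (d : measure_display) (S : measurableType d)
  (dO : measure_display) (Omega : measurableType dO) (P : probability Omega R)
  (n N : nat) (hnN : (n <= N)%N) (X : Omega -> n.-tuple S)
  (L : (N.-tuple S -> R) -> R) :
  measurable_fun setT X ->
  (forall (s : 'S_n) (A : set (n.-tuple S)), measurable A ->
     P (X @^-1` (perm_tuple s @^-1` A)) = P (X @^-1` A)) ->
  extending_functional P X L ->
  norm_functional L = 1%E ->
  countably_additive_on (smallest (@setalgebra _) (@rectangles d S N))
    (fun A => L (\1_A)) ->
  exists Q : probability (N.-tuple S) R,
    [/\ exchangeable_measure Q,
        (forall A, rectangles A -> Q A = (L (\1_A))%:E),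
        (forall A : set (n.-tuple S), measurable A ->
           Q [set x | A [tuple tnth x (widen_ord hnN i) | i < n]] = P (X @^-1` A)) &
        (forall Q' : probability (N.-tuple S) R,
           exchangeable_measure Q' ->
           (forall A, rectangles A -> Q' A = (L (\1_A))%:E) ->
           forall A, measurable A -> Q' A = Q A)].
Proof.
move=> mX _ L_ext L_norm1 L_sigma_additive.
have L_indic_cst (c : R) (A : set (N.-tuple S)) : (forall x, \1_A x = c) -> L (\1_A) = c.
  by move=> Ac; rewrite (_ : \1_A = fun=> c) ?(extending_functional_cst hnN L_ext) //;
    exact/funext.
have L0 : L (\1_set0) = 0 by apply: L_indic_cst => x; rewrite indicE in_set0.
have LT : L (\1_setT) = 1 by apply: L_indic_cst => x; rewrite indicE in_setT.
have L_ge0 A : rect_algebra A -> 0 <= L (\1_A).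
  move=> RA; apply: (extending_functional_indic_ge0 hnN L_ext L_norm1).
  exact: rect_algebra_measurable.
have [Q QE] := probability_extension_rect_algebra L_ge0 L0 LT L_sigma_additive.
have QR A : rectangles A -> Q A = (L (\1_A))%:E.
  by move=> RA; apply: QE; exact: rectangles_sub_rect_algebra.
exists Q; split => //.
- exact: (exchangeable_agreeing_on_rectangles L_ext QR).
- exact: (head_law_agreeing_on_rectangles hnN L_ext mX QR).
- move=> Q' _ Q'R A mA; apply: measure_eq_on_rectangles => //.
  + exact: probability_lty.
  + by move=> B RB; apply: (etrans (Q'R B RB)); exact/esym/QR.
Qed.
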